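(* Let $C,D\in\mathrm{Ch}_\Phi$ and let $\Psi$ be a root subsystem of $\Phi$. Then $C$ lifts $D_\Psi$ if and only if there exists a subset $X\subset\Phi^s(C)\cap\Phi^+(D)$ such that $\Psi=\mathbb R X\cap\Phi$. Moreover, if these conditions hold, then one can take $X=\Psi^s(D_\Psi)$.
   Context: $E$ is a finite-dimensional real Euclidean space with inner product $(\cdot,\cdot)$; $\Phi\subset E$ is a finite (reduced) root system (not necessarily spanning $E$, not necessarily crystallographic), with reflections $\omega_\alpha$ through $L_\alpha=\alpha^\perp$. A root subsystem is a nonempty $\Psi\subset\Phi$ stable under $\omega_\alpha$, $\alpha\in\Psi$. $\mathbb R X$ denotes the real linear span of $X$. For $X\subset\Phi$, $\mathrm{Ch}_X$ is the set of connected components of $E\setminus\bigcup_{\alpha\in X}L_\alpha$; for $D\in\mathrm{Ch}_\Phi$, $D_\Psi$ is the chamber of $\mathrm{Ch}_\Psi$ containing $D$. For $C\in\mathrm{Ch}_\Phi$, $\Phi^+(C)=\{\alpha\in\Phi:(e,\alpha)>0\ \forall e\in C\}$ and $\Phi^s(C)$ is the unique simple system of $\Phi$ contained in $\Phi^+(C)$ (a simple system is a linearly independent subset $S$ such that each root is a linear combination of elements of $S$ with all coefficients $\ge0$ or all $\le0$). Similarly $\Psi^+(F)$, $\Psi^s(F)$ for $F\in\mathrm{Ch}_\Psi$. A chamber $C\in\mathrm{Ch}_\Phi$ lifts $F\in\mathrm{Ch}_\Psi$ if $\Psi^s(F)\subset\Phi^s(C)$. *)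

(* The Euclidean space E is modelled as 'rV[R]_n (R : realType) with the
   standard dot product; its topology is the canonical one of mathcomp-analysis. *)
From HB Require Import structures.
From mathcomp Require Import all_boot all_order all_algebra.
From mathcomp Require Import all_classical all_reals topology normedtype matrix_topology matrix_normedtype.
Set Implicit Arguments. Unset Strict Implicit. Unset Printing Implicit Defensive.
Import Order.TTheory GRing.Theory Num.Theory.
Import numFieldTopology.Exports numFieldNormedType.Exports.
Local Open Scope ring_scope.
Local Open Scope classical_set_scope.

Section RootDefs.
Variables (R : realType) (n : nat).
Notation E := 'rV[R]_n.

Definition dotE (u v : E) : R := (u *m v^T) 0 0.

Definition reflE (a v : E) : E := v - ((2 * dotE v a) / dotE a a) *: a.

(* finite reduced (not necessarily crystallographic or spanning) root system *)
Definition root_system (Phi : set E) : Prop :=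
  [/\ finite_set Phi, ~ Phi 0,
      (forall a (c : R), Phi a -> Phi (c *: a) -> c = 1 \/ c = -1)
    & (forall a b, Phi a -> Phi b -> Phi (reflE a b))].

Definition root_subsystem (Phi Psi : set E) : Prop :=
  [/\ Psi `<=` Phi, Psi !=set0 & (forall a b, Psi a -> Psi b -> Psi (reflE a b))].

Definition rspan (X : set E) : set E :=
  [set v | exists s : seq E, {subset s <= X} /\ v \in <<s>>%VS].

Definition hyp_compl (X : set E) : set E := [set e | forall a, X a -> dotE e a != 0].

Definition chambers (X : set E) : set (set E) :=
  [set C | exists e, hyp_compl X e /\ C = connected_component (hyp_compl X) e].

Definition pos_roots (Phi C : set E) : set E :=
  [set a | Phi a /\ forall e, C e -> 0 < dotE e a].

Definition simple_system (Phi S : set E) : Prop :=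
  S `<=` Phi /\
  exists s : seq E,
    [/\ uniq s, S = [set x | x \in s], free s &
        forall b, Phi b -> exists c : E -> R,
          b = \sum_(a <- s) c a *: a /\
          ((forall a, a \in s -> 0 <= c a) \/ (forall a, a \in s -> c a <= 0))].

(* S is the (unique) simple system of Phi contained in Phi^+(C), i.e. S = Phi^s(C) *)
Definition simple_roots_of (Phi C S : set E) : Prop :=
  simple_system Phi S /\ S `<=` pos_roots Phi C.

End RootDefs.

(* Coordinates of roots are taken in the simple basis Phi^s(C).
   If Psi^s(D_Psi) is contained in Phi^s(C), a root b supported on Psi^s(D_Psi) lies in Psi:
   for a positive such b, some simple root s in its support has (b, s) > 0, and the
   reflection of b in s is again a positive root with the same support but smaller
   height (e, b), e in C; induction on the height ends at a simple root, which is in Psi.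
   Conversely, let Psi = RX ∩ Phi with X ⊆ Phi^s(C) ∩ Phi^+(D), and let a be a simple
   root of Psi.  Then a is a nonnegative combination of elements of X, each of which is a
   positive root of Psi for D_Psi and hence a nonnegative combination of Psi^s(D_Psi).
   As a is one of these basis vectors, every x in X occurring in a is a positive
   multiple of a, hence equal to a since Phi is reduced; so a lies in Phi^s(C). *)

From HB Require Import structures.
From mathcomp Require Import all_boot all_order all_algebra.
From mathcomp Require Import lra.
From mathcomp Require Import all_classical all_reals topology normedtype matrix_topology matrix_normedtype.
Import Order.TTheory GRing.Theory Num.Theory.
Import numFieldTopology.Exports numFieldNormedType.Exports.
Local Open Scope ring_scope.
Local Open Scope classical_set_scope.
Set Implicit Arguments. Unset Strict Implicit.

Lemma finite_set_lt_ind (T : eqType) (R : realDomainType) (A : set T) (f : T -> R)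
    (P : T -> Prop) : finite_set A ->
  (forall x, A x -> (forall y, A y -> f y < f x -> P y) -> P x) ->
  forall x, A x -> P x.
Proof.
case/finite_seqP=> l ->{A} IH.
pose below x := count (fun y => f y < f x) l.
suff: forall k x, (below x < k)%N -> x \in l -> P x by move=> H x; apply: H.
elim=> [//|k IHk] x ltxk xl; apply: IH => // y yl ltyx; apply: IHk => //.
rewrite -ltnS; apply: leq_trans ltxk; rewrite ltnS.
have -> : below x = count (fun z => f z < f y) l + count (fun z => f y <= f z < f x) l.
  rewrite /below; elim: (l) => //= z l' ->.
  case: (ltrP (f z) (f y)) => [zy|yz] /=; first by rewrite (lt_trans zy ltyx) addnA.
  by rewrite !add0n addnCA.
by rewrite -addn1 leq_add2l -has_count; apply/hasP; exists y; rewrite ?lexx.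
Qed.

Section Euclidean.
Variables (R : realType) (n : nat).
Local Notation E := 'rV[R]_n.

Lemma dotE_sum (u v : E) : dotE u v = \sum_(k < n) u 0 k * v 0 k.
Proof. by rewrite /dotE mxE; apply: eq_bigr => k _; rewrite mxE. Qed.

Lemma dotEC (u v : E) : dotE u v = dotE v u.
Proof. by rewrite !dotE_sum; apply: eq_bigr => k _; rewrite mulrC. Qed.

Lemma dotEDl (u v w : E) : dotE (u + v) w = dotE u w + dotE v w.
Proof. by rewrite !dotE_sum -big_split; apply: eq_bigr => k _; rewrite mxE mulrDl. Qed.

Lemma dotEZl c (u w : E) : dotE (c *: u) w = c * dotE u w.
Proof. by rewrite !dotE_sum mulr_sumr; apply: eq_bigr => k _; rewrite mxE mulrA. Qed.

Lemma dotE0l (w : E) : dotE 0 w = 0.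
Proof. by rewrite -(scale0r (0 : E)) dotEZl mul0r. Qed.

Lemma dotENl (u w : E) : dotE (- u) w = - dotE u w.
Proof. by rewrite -scaleN1r dotEZl mulN1r. Qed.

Lemma dotEBl (u v w : E) : dotE (u - v) w = dotE u w - dotE v w.
Proof. by rewrite dotEDl dotENl. Qed.

Lemma dotE_suml I (r : seq I) (P : pred I) (F : I -> E) w :
  dotE (\sum_(i <- r | P i) F i) w = \sum_(i <- r | P i) dotE (F i) w.
Proof. exact: (big_morph (fun u => dotE u w) (fun u v => dotEDl u v w) (dotE0l w)). Qed.

Lemma dotEE_gt0 (v : E) : v != 0 -> 0 < dotE v v.
Proof.
move=> v0; rewrite dotE_sum lt_def sumr_ge0 ?andbT => [|k _]; last first.
  by rewrite -expr2 sqr_ge0.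
apply: contraNN v0 => /eqP sum0; apply/eqP/rowP => k; rewrite mxE.
have sq0 : \sum_(j < n) v 0 j ^+ 2 = 0.
  by rewrite -[RHS]sum0; apply: eq_bigr => j _; rewrite expr2.
apply/eqP; rewrite -sqrf_eq0; apply/eqP.
exact: (psumr_eq0P (fun j _ => sqr_ge0 (v 0 j)) sq0).
Qed.

Lemma dotE_reflE (a v : E) : a != 0 -> dotE (reflE a v) a = - dotE v a.
Proof.
move=> a0; have aa := dotEE_gt0 a0.
rewrite /reflE dotEBl dotEZl mulfVK ?gt_eqF //; lra.
Qed.

Lemma reflEK (a : E) : a != 0 -> involutive (reflE a).
Proof.
move=> a0 v; rewrite {1}/reflE dotE_reflE // /reflE mulrN mulNr scaleNr opprK.
by rewrite subrK.
Qed.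

Lemma reflEE (a : E) : a != 0 -> reflE a a = - a.
Proof.
move=> a0; rewrite /reflE mulfK ?gt_eqF ?dotEE_gt0 //.
by rewrite scaler_nat mulr2n opprD addrA subrr add0r.
Qed.

Lemma dotE_reflE_lt (a b e : E) : 0 < dotE b a -> 0 < dotE e a ->
  dotE e (reflE a b) < dotE e b.
Proof.
move=> ba ea; have a0 : a != 0 by apply: contraTneq ba => ->; rewrite dotEC dotE0l ltxx.
have k0 : 0 < 2 * dotE b a / dotE a a by rewrite divr_gt0 ?dotEE_gt0 // mulr_gt0.
rewrite dotEC /reflE dotEBl dotEZl (dotEC a) (dotEC b).
by have := mulr_gt0 k0 ea; lra.
Qed.

End Euclidean.

Section Roots.
Variables (R : realType) (n : nat).
Local Notation E := 'rV[R]_n.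
Implicit Types (Phi S : set E) (a b : E).

Lemma root_neq0 Phi b : root_system Phi -> Phi b -> b != 0.
Proof. by case=> _ Phi0 _ _ Pb; apply: contra_notN Phi0 => /eqP <-. Qed.

Lemma reflE_closedN S b : (forall a b, S a -> S b -> S (reflE a b)) ->
  S b -> b != 0 -> S (- b).
Proof. by move=> refl Sb b0; rewrite -reflEE //; apply: refl. Qed.

Lemma root_scale_gt0 Phi a (c : R) : root_system Phi ->
  Phi a -> Phi (c *: a) -> 0 < c -> c = 1.
Proof.
by case=> _ _ red _ Pa Pca c0; case: (red _ _ Pa Pca) => // c1; move: c0; rewrite c1 oppr_gt0 ltr10.
Qed.

Lemma chamber_nonempty (X C : set E) : chambers X C -> C !=set0.
Proof. by case=> e [Xe ->]; exists e; apply: connected_component_refl. Qed.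

End Roots.

Section Coordinates.
Variables (R : realType) (n : nat).
Local Notation E := 'rV[R]_n.
Local Notation crd s := (coord (in_tuple s)).
Implicit Types (Phi : set E) (s : seq E) (b f : E).

Definition coherent_basis Phi s : Prop :=
  free s /\ forall b, Phi b -> b \in <<s>>%VS /\
    ((forall i, 0 <= crd s i b) \/ (forall i, crd s i b <= 0)).

Lemma simple_systemP Phi S : simple_system Phi S ->
  exists2 s, S = [set x | x \in s] & coherent_basis Phi s.
Proof.
case=> _ [s [_ -> fs expand]]; exists s => //; split => // b /expand [c [-> csign]].
have crdE i : crd s i (\sum_(a <- s) c a *: a) = c s`_i.
  by rewrite (big_nth 0) big_mkord (coord_sum_free (fun j : 'I_(size s) => c s`_j)).
split; first by rewrite big_seq; apply: memv_suml => a sa; apply/memvZ/memv_span.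
by case: csign => cs; [left|right] => i; rewrite crdE; apply/cs/mem_nth.
Qed.

Lemma coord_span_notin s (sq : seq E) b (i : 'I_(size s)) :
  free s -> {subset sq <= s} -> s`_i \notin sq -> b \in <<sq>>%VS -> crd s i b = 0.
Proof.
move=> fs sqs si /(@coord_span _ _ _ (in_tuple sq)) ->.
rewrite linear_sum big1 // => j _; rewrite linearZ /=.
have sqj : sq`_j \in s by apply/sqs/mem_nth.
pose k := index sq`_j s; have lt_idx : (k < size s)%N by rewrite index_mem.
rewrite -(nth_index 0 sqj) (@coord_free _ _ _ (in_tuple s) (Ordinal lt_idx) i fs) /=.
case: eqP => [eq_ji|_]; last by rewrite mulr0.
by move: si; rewrite -eq_ji nth_index // mem_nth.
Qed.

Lemma dotE_coord s b f : b \in <<s>>%VS ->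
  dotE f b = \sum_i crd s i b * dotE f s`_i.
Proof.
move=> /(@coord_span _ _ _ (in_tuple s)) {1}->.
rewrite dotEC dotE_suml; apply: eq_bigr => i _; by rewrite dotEZl dotEC.
Qed.

Lemma coord_ge0_dotE Phi s b f : coherent_basis Phi s -> Phi b -> 0 < dotE f b ->
  (forall i, crd s i b != 0 -> 0 < dotE f s`_i) -> forall i, 0 <= crd s i b.
Proof.
move=> [_ /(_ b)] + Pb fb fs; case/(_ Pb) => bs [//|cb]; exfalso.
suff : dotE f b <= 0 by rewrite leNgt fb.
rewrite (dotE_coord f bs); apply: sumr_le0 => i _.
have [->|/fs/ltW] := eqVneq (crd s i b) 0; first by rewrite mul0r.
exact: mulr_le0_ge0.
Qed.

Lemma exists_coord_gt0 s b :
  b \in <<s>>%VS -> b != 0 -> (forall i, 0 <= crd s i b) ->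
  exists i, 0 < crd s i b /\ 0 < dotE s`_i b.
Proof.
move=> bs b0 cb; apply: contrapT => /forallNP ncb.
have : dotE b b <= 0.
  rewrite (dotE_coord b bs); apply: sumr_le0 => i _; rewrite dotEC.
  have [->|ci] := eqVneq (crd s i b) 0; first by rewrite mul0r.
  apply: mulr_ge0_le0 => //; rewrite leNgt; apply: contra_notN (ncb i) => si.
  by split; rewrite // lt_def ci cb.
by rewrite leNgt dotEE_gt0.
Qed.

Lemma coord_reflE s (i j : 'I_(size s)) b : free s ->
  crd s j (reflE s`_i b) = crd s j b - 2 * dotE b s`_i / dotE s`_i s`_i * (i == j)%:R.
Proof. by move=> fs; rewrite /reflE linearB linearZ /= coord_free. Qed.

Lemma nneg_comb_basis_vector (t u : seq E) (c : 'I_(size u) -> R)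
    (j : 'I_(size t)) (i : 'I_(size u)) :
  free t -> t`_j = \sum_k c k *: u`_k -> (forall k, 0 <= c k) ->
  (forall k, c k != 0 -> forall m, 0 <= crd t m u`_k) ->
  u`_i \in <<t>>%VS -> 0 < c i -> u`_i = crd t j u`_i *: t`_j.
Proof.
move=> ft tE c_ge0 u_ge0 ui ci.
have u0 m : m != j -> crd t m u`_i = 0.
  move=> mj; have term_ge0 k : 0 <= c k * crd t m u`_k.
    by have [->|/u_ge0 ukm] := eqVneq (c k) 0; [rewrite mul0r | exact: mulr_ge0].
  have : \sum_k c k * crd t m u`_k = 0.
    have := @coord_free _ _ _ (in_tuple t) j m ft.
    rewrite eq_sym (negbTE mj) tE linear_sum mulr0n => sum0; rewrite -[RHS]sum0.
    by apply: eq_bigr => k _; rewrite linearZ.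
  move/(psumr_eq0P (fun k _ => term_ge0 k))/(_ i isT)/eqP.
  by rewrite mulf_eq0 gt_eqF //= => /eqP.
rewrite {1}(@coord_span _ _ _ (in_tuple t) _ ui) (bigD1 j) //= big1 ?addr0 // => m mj.
by rewrite u0 ?scale0r.
Qed.

End Coordinates.

Section SubsystemGeneration.
Variables (R : realType) (n : nat).
Local Notation E := 'rV[R]_n.
Local Notation crd s := (coord (in_tuple s)).
Variables (Phi : set E) (s : seq E) (e0 : E).
Hypotheses (rootPhi : root_system Phi) (basis_s : coherent_basis Phi s)
  (Phi_s : forall i : 'I_(size s), Phi s`_i)
  (e0_s : forall i : 'I_(size s), 0 < dotE e0 s`_i).

Lemma reflE_simple_pos b (i : 'I_(size s)) :
  Phi b -> (forall j, 0 <= crd s j b) -> b != s`_i -> forall j, 0 <= crd s j (reflE s`_i b).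
Proof.
move=> Pb cb bsi; have [fs /(_ (reflE s`_i b))] := basis_s.
have Pb' : Phi (reflE s`_i b) by case: rootPhi => _ _ _; apply.
case/(_ Pb') => _ [//|cb']; exfalso.
have c0 j : j != i -> crd s j b = 0.
  move=> ji; apply/eqP; rewrite eq_le cb andbT.
  by have := cb' j; rewrite coord_reflE // eq_sym (negbTE ji) mulr0 subr0.
have bE : b = crd s i b *: s`_i.
  have [bs _] := basis_s.2 b Pb.
  rewrite {1}(@coord_span _ _ _ (in_tuple s) b bs) (bigD1 i) //= big1 ?addr0 //.
  by move=> j ji; rewrite c0 ?scale0r.
have ci : 0 < crd s i b.
  rewrite lt_def cb andbT; apply/eqP => ci0.
  by move: (root_neq0 rootPhi Pb); rewrite bE ci0 scale0r eqxx.
move/eqP: bsi; apply; rewrite bE (root_scale_gt0 rootPhi (Phi_s i) _ ci) ?scale1r //.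
by rewrite -bE.
Qed.

Variables (Psi X : set E).
Hypotheses (reflPsi : forall a b, Psi a -> Psi b -> Psi (reflE a b))
  (X_Psi : forall i : 'I_(size s), X s`_i -> Psi s`_i).

Lemma pos_root_in_subsystem b : Phi b -> (forall i, 0 <= crd s i b) ->
  (forall i : 'I_(size s), ~ X s`_i -> crd s i b = 0) -> Psi b.
Proof.
move: b; apply: (finite_set_lt_ind (f := dotE e0)); first by case: rootPhi.
move=> b Pb IH cb Xb.
have b0 := root_neq0 rootPhi Pb.
have [fs /(_ b Pb) [bs _]] := basis_s.
have [i [ci sib]] := exists_coord_gt0 bs b0 cb.
have Xi : X s`_i by apply: contrapT => /Xb ci0; move: ci; rewrite ci0 ltxx.
have [->|bsi] := eqVneq b s`_i; first exact: X_Psi.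
have si0 := root_neq0 rootPhi (Phi_s i).
rewrite -(reflEK si0 b); apply: reflPsi; first exact: X_Psi.
apply: IH; first by case: rootPhi => _ _ _; apply.
- by apply: dotE_reflE_lt; rewrite // dotEC.
- exact: reflE_simple_pos.
move=> j Xj; rewrite coord_reflE // Xb //.
by case: eqP => [ij|_]; [case: Xj; rewrite -ij | rewrite mulr0 subr0].
Qed.

Lemma root_in_subsystem b :
  Phi b -> (forall i : 'I_(size s), ~ X s`_i -> crd s i b = 0) -> Psi b.
Proof.
move=> Pb Xb; have b0 := root_neq0 rootPhi Pb.
have [_ /(_ b Pb) [_ [cb|cb]]] := basis_s; first exact: pos_root_in_subsystem.
rewrite -(opprK b); apply: reflE_closedN => //; last by rewrite oppr_eq0.
apply: pos_root_in_subsystem.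
- by rewrite -reflEE //; case: rootPhi => _ _ _; apply.
- by move=> i; rewrite linearN /= oppr_ge0.
- by move=> i /Xb; rewrite linearN /= => ->; rewrite oppr0.
Qed.

End SubsystemGeneration.

Section Lifting.
Variables (R : realType) (n : nat).
Local Notation E := 'rV[R]_n.
Local Notation crd s := (coord (in_tuple s)).
Variables (Phi Psi : set E) (sc sf : seq E).
Hypotheses (rootPhi : root_system Phi) (Psi_Phi : Psi `<=` Phi)
  (basis_sc : coherent_basis Phi sc) (basis_sf : coherent_basis Psi sf).

Lemma coord_span_out (X : set E) b (i : 'I_(size sc)) :
  (forall x, X x -> x \in sc) -> rspan X b -> ~ X sc`_i -> crd sc i b = 0.
Proof.
move=> Xsc [sq [sqX bsq]] Xi; apply: (coord_span_notin basis_sc.1 _ _ bsq).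
  by move=> x /sqX; rewrite in_setE => /Xsc.
by apply: contra_notN Xi => /sqX; rewrite in_setE.
Qed.

Lemma subsystem_span_simple (C : set E) (eC : E) :
  (forall a b, Psi a -> Psi b -> Psi (reflE a b)) ->
  [set` sc] `<=` pos_roots Phi C -> C eC -> {subset sf <= sc} ->
  [set` sf] `<=` Psi -> Psi = rspan [set` sf] `&` Phi.
Proof.
move=> reflPsi scC CeC sfsc sfPsi; apply/seteqP; split => [b Pb|b [bsf Pb]].
  split; last exact: Psi_Phi.
  by exists sf; split; [move=> x; rewrite in_setE | exact: (basis_sf.2 b Pb).1].
have scPhi (i : 'I_(size sc)) : Phi sc`_i by have [] := scC _ (mem_nth 0 (ltn_ord i)).
have eC_sc (i : 'I_(size sc)) : 0 < dotE eC sc`_i.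
  by apply: (scC _ (mem_nth 0 (ltn_ord i))).2.
apply: (root_in_subsystem rootPhi basis_sc scPhi eC_sc (X := [set` sf]) reflPsi) => //.
  by move=> i /sfPsi.
move=> i Xi.
exact: (coord_span_out sfsc bsf).
Qed.

Lemma lift_of_span (D F X : set E) (eD : E) :
  [set` sf] `<=` pos_roots Psi F -> D `<=` F -> D eD ->
  X `<=` [set` sc] `&` pos_roots Phi D -> Psi = rspan X `&` Phi ->
  {subset sf <= sc}.
Proof.
move=> sfF DF DeD Xsc PsiE a asf.
have X_Psi x : X x -> Psi x.
  move=> Xx; rewrite PsiE; split; last by case: (Xsc x Xx) => _ [].
  exists [:: x]; split; last exact: memv_span (mem_head _ _).
  by move=> y; rewrite inE in_setE => /eqP ->.
have eD_X x : X x -> 0 < dotE eD x by move=> /Xsc [_ [_]]; apply.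
have [Psia eD_a] := sfF a asf; have /eD_a {}eD_a := DF _ DeD.
have X_sc x : X x -> x \in sc by move=> /Xsc [].
have cX (i : 'I_(size sc)) : ~ X sc`_i -> crd sc i a = 0.
  by move: Psia; rewrite {1}PsiE => -[aX _]; apply: (coord_span_out X_sc).
have Xcoord (i : 'I_(size sc)) : crd sc i a != 0 -> X sc`_i.
  by move=> ci; apply: contrapT => /cX; apply/eqP.
have [_ /(_ a (Psi_Phi Psia)) [a_sc _]] := basis_sc.
have ca_ge0 : forall i, 0 <= crd sc i a.
  by apply: (coord_ge0_dotE basis_sc (Psi_Phi Psia) eD_a) => i /Xcoord /eD_X.
have [i [cai _]] := exists_coord_gt0 a_sc (root_neq0 rootPhi (Psi_Phi Psia)) ca_ge0.
have /X_Psi Psi_i : X sc`_i by apply/Xcoord; rewrite gt_eqF.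
have sc_sf k : crd sc k a != 0 -> forall m, 0 <= crd sf m sc`_k.
  move=> /Xcoord Xk; apply: (coord_ge0_dotE basis_sf (X_Psi _ Xk) (eD_X _ Xk)) => m _.
  by apply: (sfF _ (mem_nth 0 (ltn_ord m))).2; apply: DF.
have ja : (index a sf < size sf)%N by rewrite index_mem.
have aj : sf`_(Ordinal ja) = a := nth_index 0 asf.
have := nneg_comb_basis_vector (c := fun k => crd sc k a) (j := Ordinal ja) (i := i).
rewrite aj => /(_ basis_sf.1 (@coord_span _ _ _ (in_tuple sc) _ a_sc) ca_ge0 sc_sf).
move=> /(_ (basis_sf.2 _ Psi_i).1 cai) sc_iE.
have lam_gt0 : 0 < crd sf (Ordinal ja) sc`_i.
  have := eD_X _ (Xcoord _ (lt0r_neq0 cai)).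
  by rewrite {1}sc_iE (dotEC eD) dotEZl (dotEC a) pmulr_lgt0.
have Phi_i : Phi (crd sf (Ordinal ja) sc`_i *: a) by rewrite -sc_iE; apply: Psi_Phi.
have := mem_nth 0 (ltn_ord i).
by rewrite {1}sc_iE (root_scale_gt0 rootPhi (Psi_Phi Psia) Phi_i lam_gt0) scale1r.
Qed.

End Lifting.

Theorem lemma2 (R : realType) (n : nat) (Phi Psi C D F SC SF : set 'rV[R]_n) :
  root_system Phi -> root_subsystem Phi Psi ->
  chambers Phi C -> chambers Phi D ->
  chambers Psi F -> D `<=` F ->
  simple_roots_of Phi C SC -> simple_roots_of Psi F SF ->
  (SF `<=` SC <->
     exists X : set 'rV[R]_n,
       X `<=` SC `&` pos_roots Phi D /\ Psi = rspan X `&` Phi)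
  /\ (SF `<=` SC -> SF `<=` SC `&` pos_roots Phi D /\ Psi = rspan SF `&` Phi).
Proof.
move=> rootPhi [Psi_Phi _ reflPsi] /chamber_nonempty [eC CeC] /chamber_nonempty [eD DeD].
move=> _ DF.
move=> [/simple_systemP [sc -> basis_sc] scC] [/simple_systemP [sf -> basis_sf] sfF].
have sfPsi : [set` sf] `<=` Psi by move=> x /sfF [].
have lift_span : [set` sf] `<=` [set` sc] ->
    [set` sf] `<=` [set` sc] `&` pos_roots Phi D /\
    Psi = rspan [set` sf] `&` Phi.
  move=> sfsc; split.
    move=> x xsf; split; first exact: sfsc.
    by split; [apply/Psi_Phi/sfPsi | move=> e /DF; apply: (sfF _ xsf).2].
  exact: (subsystem_span_simple rootPhi Psi_Phi basis_sc basis_sf reflPsi scC CeC).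
split=> //; split=> [/lift_span|[X [Xsc PsiE]]]; first by exists [set` sf].
exact: (lift_of_span rootPhi Psi_Phi basis_sc basis_sf sfF DF DeD Xsc PsiE).
Qed.
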